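(* Let $0<p<\tfrac12$ and let $Q=(q_{j,k})_{j,k\geq 0}$ be the generator on $\mathbb N_0$ given by $q_{j,j+1}=jp$, $q_{j,k}=\binom{j}{k}p^k(1-p)^{j-k}$ for $0\leq k\leq j-1$, $q_{j,j}=-(jp+1-p^j)$, and $q_{j,k}=0$ otherwise. Then $x_k=k$ ($k\geq1$) is a $(1-2p)$-invariant vector for $Q$, i.e. a positive vector $x=(x_k)_{k\geq1}$ with $\sum_{k\geq 1}q_{j,k}x_k=-(1-2p)x_j$ for all $j\geq1$, and any $(1-2p)$-invariant vector for $Q$ is a positive multiple of this one.
   Context: A $\lambda$-invariant vector for $Q$ is a positive right eigenvector of $Q$ restricted to $\mathbb N=\{1,2,\dots\}$ with eigenvalue $-\lambda$. *)

From Stdlib Require Import Reals Arith.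
From Coquelicot Require Import Coquelicot.
Open Scope R_scope.

Definition binom (j k : nat) : R := Stdlib.Reals.Binomial.C j k.

Definition qgen (p : R) (j k : nat) : R :=
  if Nat.eqb k (S j) then INR j * p
  else if Nat.ltb k j then binom j k * p ^ k * (1 - p) ^ (j - k)
  else if Nat.eqb k j then - (INR j * p + 1 - p ^ j)
  else 0.

(* Vectors are
   functions nat -> R; only the entries with index >= 1 matter. *)
Definition invariant_vector (Q : nat -> nat -> R) (lam : R) (x : nat -> R) : Prop :=
  (forall k : nat, (1 <= k)%nat -> 0 < x k) /\
  (forall j : nat, (1 <= j)%nat ->
     is_series (fun k : nat => if Nat.eqb k 0 then 0 else Q j k * x k) (- lam * x j)).

(* Row j of Q is supported on the indices k <= j + 1, so every row sum is a
   finite sum. For x_k = k the part k < j is the mean j p of a binomial law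
   minus its top term j p^j, and the row sum collapses to -(1 - 2p) j.
   Conversely the equation of row j has the coefficient q_{j,j+1} = j p <> 0
   in front of x_{j+1}, so it determines x_{j+1} from x_1, ..., x_j: an
   invariant vector is determined by x_1, hence is x_1 times x_k = k. *)

From Stdlib Require Import Reals Lia Lra.
From Coquelicot Require Import Coquelicot.
Open Scope R_scope.

Lemma is_series_finite_support (a : nat -> R) (n : nat) :
  (forall k, (n < k)%nat -> a k = 0) -> is_series a (sum_f_R0 a n).
Proof.
  intros a0. unfold is_series.
  apply (filterlim_ext_loc (fun _ => sum_f_R0 a n)); [|apply filterlim_const].
  exists n. intros m nm. rewrite sum_n_Reals.
  induction nm as [|m nm IH]; [reflexivity|].
  rewrite tech5, a0, <- IH by lia. ring.
Qed.

Definition row_term (Q : nat -> nat -> R) (x : nat -> R) (j k : nat) : R :=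
  if Nat.eqb k 0 then 0 else Q j k * x k.

Lemma row_term_scale Q c x j k :
  row_term Q (fun i => c * x i) j k = c * row_term Q x j k.
Proof. unfold row_term. destruct (Nat.eqb k 0); ring. Qed.

Lemma row_sum_ext Q x y j n :
  (forall k, (1 <= k <= n)%nat -> x k = y k) ->
  sum_f_R0 (row_term Q x j) n = sum_f_R0 (row_term Q y j) n.
Proof.
  intros xy. apply sum_eq. intros k kn. unfold row_term.
  destruct (Nat.eqb k 0) eqn:k0; [reflexivity|].
  apply Nat.eqb_neq in k0. rewrite xy by lia. reflexivity.
Qed.

Section UpperHessenberg.

Variable Q : nat -> nat -> R.
Hypothesis Q_upper_hessenberg : forall j k, (S j < k)%nat -> Q j k = 0.

Definition row_eigen_eq (lam : R) (x : nat -> R) : Prop :=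
  forall j, (1 <= j)%nat -> sum_f_R0 (row_term Q x j) (S j) = - lam * x j.

Lemma is_series_row_term x j :
  is_series (row_term Q x j) (sum_f_R0 (row_term Q x j) (S j)).
Proof.
  apply is_series_finite_support. intros k jk. unfold row_term.
  destruct (Nat.eqb k 0); [reflexivity|]. rewrite Q_upper_hessenberg by lia. ring.
Qed.

Lemma invariant_vectorE lam x :
  invariant_vector Q lam x <->
  (forall k, (1 <= k)%nat -> 0 < x k) /\ row_eigen_eq lam x.
Proof.
  split; intros [x_pos x_eq]; split; trivial; intros j j1.
  - rewrite <- (is_series_unique _ _ (x_eq j j1)).
    symmetry. apply is_series_unique, is_series_row_term.
  - rewrite <- (x_eq j j1). apply is_series_row_term.
Qed.

Lemma row_eigen_eq_scale lam c x :
  row_eigen_eq lam x -> row_eigen_eq lam (fun k => c * x k).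
Proof.
  intros x_eq j j1.
  rewrite (sum_eq _ (fun k => row_term Q x j k * c)) by (intros; rewrite row_term_scale; ring).
  rewrite <- scal_sum, x_eq by exact j1. ring.
Qed.

Hypothesis Q_super_neq0 : forall j, (1 <= j)%nat -> Q j (S j) <> 0.

Lemma row_eigen_eq_unique lam x y :
  row_eigen_eq lam x -> row_eigen_eq lam y -> x 1%nat = y 1%nat ->
  forall k, (1 <= k)%nat -> x k = y k.
Proof.
  intros x_eq y_eq xy1.
  enough (xy : forall n k, (1 <= k <= n)%nat -> x k = y k) by (intros k k1; apply (xy k); lia).
  induction n as [|n IH]; intros k kn; [lia|].
  destruct (Nat.eq_dec k (S n)) as [->|kn']; [|apply IH; lia].
  destruct (Nat.eq_dec n 0) as [->|n0]; [exact xy1|].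
  pose proof (x_eq n ltac:(lia)) as xn. pose proof (y_eq n ltac:(lia)) as yn.
  rewrite tech5 in xn, yn. unfold row_term at 2 in xn. unfold row_term at 2 in yn.
  simpl Nat.eqb in xn, yn. cbv iota in xn, yn.
  rewrite (row_sum_ext Q x y) in xn by (intros; apply IH; lia).
  rewrite (IH n) in xn by lia.
  apply (Rmult_eq_reg_l (Q n (S n))); [lra|]. apply Q_super_neq0. lia.
Qed.

Lemma invariant_vector_proportional lam x y :
  invariant_vector Q lam x -> invariant_vector Q lam y ->
  forall k, (1 <= k)%nat -> y k = y 1%nat / x 1%nat * x k.
Proof.
  intros [x_pos x_eq]%invariant_vectorE [_ y_eq]%invariant_vectorE.
  apply row_eigen_eq_unique with lam; [exact y_eq|apply row_eigen_eq_scale, x_eq|].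
  field. apply Rgt_not_eq, x_pos. lia.
Qed.

End UpperHessenberg.

Lemma qgen_lt p j k : (k < j)%nat -> qgen p j k = binom j k * p ^ k * (1 - p) ^ (j - k).
Proof.
  intros kj. unfold qgen.
  replace (Nat.eqb k (S j)) with false by (symmetry; apply Nat.eqb_neq; lia).
  replace (Nat.ltb k j) with true by (symmetry; apply Nat.ltb_lt; lia). reflexivity.
Qed.

Lemma qgen_diag p j : qgen p j j = - (INR j * p + 1 - p ^ j).
Proof.
  unfold qgen.
  replace (Nat.eqb j (S j)) with false by (symmetry; apply Nat.eqb_neq; lia).
  rewrite Nat.ltb_irrefl, Nat.eqb_refl. reflexivity.
Qed.

Lemma qgen_succ p j : qgen p j (S j) = INR j * p.
Proof. unfold qgen. rewrite Nat.eqb_refl. reflexivity. Qed.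

Lemma qgen_succ_neq0 p j : p <> 0 -> (1 <= j)%nat -> qgen p j (S j) <> 0.
Proof.
  intros p0 j1. rewrite qgen_succ.
  apply Rmult_integral_contrapositive_currified; [apply not_0_INR; lia|exact p0].
Qed.

Lemma qgen_gt p j k : (S j < k)%nat -> qgen p j k = 0.
Proof.
  intros jk. unfold qgen.
  replace (Nat.eqb k (S j)) with false by (symmetry; apply Nat.eqb_neq; lia).
  replace (Nat.ltb k j) with false by (symmetry; apply Nat.ltb_nlt; lia).
  replace (Nat.eqb k j) with false by (symmetry; apply Nat.eqb_neq; lia).
  reflexivity.
Qed.

Lemma binom_diag n : binom n n = 1.
Proof. unfold binom, Binomial.C. rewrite Nat.sub_diag. simpl. field. apply INR_fact_neq_0. Qed.

Lemma succ_mul_binom_succ n k : (k <= n)%nat ->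
  INR (S k) * binom (S n) (S k) = INR (S n) * binom n k.
Proof.
  intros kn. unfold binom, Binomial.C. replace (S n - S k)%nat with (n - k)%nat by lia.
  rewrite !fact_simpl, !mult_INR.
  pose proof (INR_fact_neq_0 n). pose proof (INR_fact_neq_0 k).
  pose proof (INR_fact_neq_0 (n - k)). pose proof (not_0_INR (S k) ltac:(lia)).
  field. repeat split; assumption.
Qed.

Lemma binomial_mean p n :
  sum_f_R0 (fun k => INR k * binom n k * p ^ k * (1 - p) ^ (n - k)) n = INR n * p.
Proof.
  destruct n as [|n]; [simpl; ring|].
  rewrite decomp_sum by lia. simpl pred.
  rewrite (sum_eq _ (fun k => binom n k * p ^ k * (1 - p) ^ (n - k) * (INR (S n) * p))).
  - rewrite <- scal_sum. unfold binom. rewrite <- binomial.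
    replace (p + (1 - p)) with 1 by ring. rewrite pow1. simpl. ring.
  - intros k kn. replace (S n - S k)%nat with (n - k)%nat by lia.
    rewrite succ_mul_binom_succ by lia. simpl pow. ring.
Qed.

Lemma qgen_lower_row_sum_INR p m :
  sum_f_R0 (row_term (qgen p) INR (S m)) m = INR (S m) * p - INR (S m) * p ^ S m.
Proof.
  pose proof (binomial_mean p (S m)) as mean.
  rewrite tech5, Nat.sub_diag, binom_diag, pow_O in mean.
  rewrite (sum_eq _ (fun k => INR k * binom (S m) k * p ^ k * (1 - p) ^ (S m - k))); [lra|].
  intros k km. unfold row_term. rewrite qgen_lt by lia.
  destruct (Nat.eqb k 0) eqn:k0; [apply Nat.eqb_eq in k0; subst; simpl|]; ring.
Qed.

Lemma qgen_row_eigen_eq_INR p : row_eigen_eq (qgen p) (1 - 2 * p) INR.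
Proof.
  intros [|m] m1; [lia|].
  rewrite !tech5, qgen_lower_row_sum_INR. unfold row_term. simpl Nat.eqb. cbv iota.
  rewrite qgen_diag, qgen_succ, (S_INR (S m)). ring.
Qed.

Theorem lemma3 (p : R) (hp0 : 0 < p) (hp1 : p < 1 / 2) :
  invariant_vector (qgen p) (1 - 2 * p) (fun k : nat => INR k) /\
  (forall x : nat -> R, invariant_vector (qgen p) (1 - 2 * p) x ->
     exists c : R, 0 < c /\ forall k : nat, (1 <= k)%nat -> x k = c * INR k).
Proof.
  (* [p < 1/2] only makes the eigenvalue -(1 - 2p) negative. *)
  assert (INR_invariant : invariant_vector (qgen p) (1 - 2 * p) INR).
  { apply invariant_vectorE; [exact (qgen_gt p)|]. split.
    - intros k k1. apply lt_0_INR. lia.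
    - exact (qgen_row_eigen_eq_INR p). }
  split; [exact INR_invariant|].
  intros x x_inv. exists (x 1%nat). split.
  - apply (proj1 x_inv). lia.
  - intros k k1.
    assert (p0 : p <> 0) by lra.
    rewrite (invariant_vector_proportional (qgen p) (qgen_gt p) (fun j => qgen_succ_neq0 p j p0)
               _ _ _ INR_invariant x_inv k k1).
    simpl INR. field.
Qed.
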